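(* Let $A \in \mathbb{R}^{m \times n}$ be such that the map $\psi_A : \mathbb{R}^n \to \{-1,0,1\}^m$, $\psi_A(\mathbf{x}) = \mathrm{sign}(A\mathbf{x})$, satisfies $\psi_A(\mathbf{x}_1) \neq \psi_A(\mathbf{x}_2)$ whenever $\|\mathbf{x}_1\|_0, \|\mathbf{x}_2\|_0 \le k$ and $\mathrm{supp}(\mathbf{x}_1) \neq \mathrm{supp}(\mathbf{x}_2)$. Then $m = \Omega(k^2 \log n / \log k)$.
   Context: For real $x$, $\mathrm{sign}(x) = x/|x|$ if $x \neq 0$ and $\mathrm{sign}(0) = 0$, applied coordinatewise to vectors. $\|\mathbf{x}\|_0$ denotes the number of nonzero coordinates of $\mathbf{x}$, and $\mathrm{supp}(\mathbf{x})$ the set of indices of nonzero coordinates. *)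

From HB Require Import structures.
From mathcomp Require Import all_boot all_order all_algebra.
From mathcomp Require Import all_classical all_reals all_analysis.
Set Implicit Arguments. Unset Strict Implicit. Unset Printing Implicit Defensive.
Import Order.TTheory GRing.Theory Num.Theory.
Local Open Scope ring_scope.

Definition sgv {R : numDomainType} {m : nat} (v : 'cV[R]_m) : 'cV[R]_m :=
  map_mx Num.sg v.

Definition psi {R : numDomainType} {m n : nat} (A : 'M[R]_(m, n)) (x : 'cV[R]_n)
  : 'cV[R]_m := sgv (A *m x).

Definition supp {R : numDomainType} {n : nat} (x : 'cV[R]_n) : {set 'I_n} :=
  [set i | x i 0 != 0].

Definition l0norm {R : numDomainType} {n : nat} (x : 'cV[R]_n) : nat := #|supp x|.

Definition separates_supports {R : numDomainType} {m n : nat} (k : nat)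
  (A : 'M[R]_(m, n)) : Prop :=
  forall x1 x2 : 'cV[R]_n,
    (l0norm x1 <= k)%N -> (l0norm x2 <= k)%N -> supp x1 != supp x2 ->
    psi A x1 != psi A x2.

(* If the rows of A vanishing on a set S of fewer than k columns all vanished
   on a further column j, then moving a generic vector supported on S slightly
   in the direction e_j would keep sign(Ax) while enlarging its support.  Hence
   no column support {r | A r j != 0} is covered by k - 1 others: the column
   supports form a (k-1)-cover-free family of subsets of an m-set.  In an
   e-cover-free family, a member meeting the ground set in more than e t points
   can be deleted together with its points, leaving an (e-1)-cover-free family;
   once no such member remains, every member owns a t-subset contained in no
   other member.  So n <= k + sum_(i <= t) C(m, i) as soon as
   2 m <= t k (k - 1).  With t ~ 2 m / k^2 and
   sum_(i <= t) C(m, i) <= (e (m + t) / t)^t this gives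
   ln n = O(t ln k) = O(m ln k / k^2). *)

From HB Require Import structures.
From mathcomp Require Import all_boot all_order all_algebra.
From mathcomp Require Import all_classical all_reals all_analysis.
From mathcomp Require Import zify ring lra.
Set Implicit Arguments. Unset Strict Implicit. Unset Printing Implicit Defensive.
Import Order.TTheory GRing.Theory Num.Theory.

Lemma exists_subset_card (T : finType) (F : {set T}) (t : nat) :
  (t <= #|F|)%N -> exists2 U : {set T}, U \subset F & #|U| = t.
Proof.
move=> /card_geqP [s [s_uniq <- sF]]; exists [set x in s].
  by apply/fintype.subsetP => x; rewrite inE => /sF.
by rewrite cardsE; apply/card_uniqP.
Qed.

Lemma card_draws_le (T : finType) (t : nat) :
  #|[set U : {set T} | (#|U| <= t)%N]| = (\sum_(i < t.+1) 'C(#|T|, i))%N.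
Proof.
elim: t => [|t IHt].
  rewrite big_ord1 bin0 -(cards1 (finset.set0 : {set T})); apply: eq_card => U.
  by rewrite !inE leqn0 cards_eq0.
have -> : [set U : {set T} | (#|U| <= t.+1)%N] =
    [set U : {set T} | (#|U| <= t)%N] :|: [set U : {set T} | #|U| == t.+1].
  by apply/setP => U; rewrite !inE leq_eqVlt ltnS orbC.
rewrite cardsU card_draws big_ord_recr /= IHt.
suff -> : [set U : {set T} | (#|U| <= t)%N] :&: [set U : {set T} | #|U| == t.+1]
    = finset.set0.
  by rewrite cards0 subn0.
by apply/setP => U; rewrite !inE andbC; case: eqP => [->|]; rewrite ?ltnn.
Qed.

Section CoverFree.

Variables (I T : finType) (f : I -> {set T}).

Definition cover_free (e : nat) (Y : {set T}) (J : {set I}) : Prop :=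
  forall (S : {set I}) (j : I), S \subset J -> (#|S| <= e)%N -> j \in J ->
    j \notin S -> ~~ (f j :&: Y \subset \bigcup_(s in S) f s).

Lemma cover_by_small_subsets (J : {set I}) (t a : nat) (F : {set T}) :
  (#|F| <= a * t)%N ->
  (forall U : {set T}, U \subset F -> (#|U| <= t)%N ->
     exists2 j, j \in J & U \subset f j) ->
  exists S : {set I}, [/\ S \subset J, (#|S| <= a)%N & F \subset \bigcup_(s in S) f s].
Proof.
elim: a F => [|a IHa] F cardF small.
  exists finset.set0; rewrite finset.sub0set cards0; split=> //.
  by move: cardF; rewrite leqn0 cards_eq0 => /eqP ->; rewrite finset.sub0set.
have [U UF cardU] := exists_subset_card (geq_minr t #|F|).
have [S [SJ cardS FUS]] : exists S : {set I},
    [/\ S \subset J, (#|S| <= a)%N & F :\: U \subset \bigcup_(s in S) f s].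
  apply: IHa => [|V VFU]; first by rewrite cardsD (finset.setIidPr UF) cardU; lia.
  by apply: small; apply: fintype.subset_trans VFU (subsetDl _ _).
have [|j jJ Uj] := small U UF; first by rewrite cardU geq_minl.
exists (j |: S); split.
- by rewrite finset.subUset finset.sub1set jJ SJ.
- by rewrite cardsU1; case: (j \in S) => /=; lia.
apply/fintype.subsetP => x xF; rewrite finset.bigcup_setU finset.big_set1 inE.
case xU: (x \in U); first by rewrite (fintype.subsetP Uj).
by rewrite (fintype.subsetP FUS) ?orbT // inE xU.
Qed.

Lemma cover_free_private_subset (e t : nat) (Y : {set T}) (J : {set I}) (j : I) :
  cover_free e.+1 Y J -> j \in J -> (#|f j :&: Y| <= e.+1 * t)%N ->
  exists U : {set T}, [/\ U \subset f j :&: Y, (#|U| <= t)%N &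
    forall j', j' \in J -> j' != j -> ~~ (U \subset f j')].
Proof.
move=> cf jJ small.
pose private (U : {set T}) := [forall j' in J :\ j, ~~ (U \subset f j')].
have [U /and3P [UY Ut /forall_inP priv]|none] :=
  pickP [pred U : {set T} | [&& U \subset f j :&: Y, #|U| <= t & private U]].
  by exists U; split=> // j' j'J j'j; apply: priv; rewrite !inE j'j.
have [|S [SJ cardS cover]] := cover_by_small_subsets (J := J :\ j) small.
  move=> U UY Ut; move: (none U); rewrite /= UY Ut /= => /negbT.
  by case/forall_inPn => j' j'J /negPn; exists j'.
have jS : j \notin S by apply/negP => /(fintype.subsetP SJ); rewrite !inE eqxx.
have SJ' : S \subset J := fintype.subset_trans SJ (subsetDl _ _).
by move: (cf S j SJ' cardS jJ jS); rewrite cover.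
Qed.

Lemma cover_free_card_le_small_sets (e t : nat) (Y : {set T}) (J : {set I}) :
  cover_free e.+1 Y J -> (forall j, j \in J -> (#|f j :&: Y| <= e.+1 * t)%N) ->
  (#|J| <= #|[set U : {set T} | (#|U| <= t)%N]|)%N.
Proof.
move=> cf small.
have /fin_all_exists [g gP] : forall j, exists U : {set T}, j \in J ->
    [/\ U \subset f j :&: Y, (#|U| <= t)%N &
        forall j', j' \in J -> j' != j -> ~~ (U \subset f j')].
  move=> j; case: (boolP (j \in J)) => [jJ|jJ]; last by exists finset.set0.
  by have [U UP] := cover_free_private_subset cf jJ (small j jJ); exists U.
have g_inj : {in J &, injective g}.
  move=> j1 j2 j1J j2J g12; apply/eqP/negPn/negP => j12.
  have [g1f _ _] := gP j1 j1J; have [_ _ g2priv] := gP j2 j2J.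
  move: (g2priv j1 j1J j12); rewrite -g12.
  by rewrite (fintype.subset_trans g1f (subsetIl _ _)).
rewrite -(card_in_imset g_inj); apply: subset_leq_card.
by apply/fintype.subsetP => _ /imsetP [j jJ ->]; rewrite inE; case: (gP j jJ).
Qed.

Lemma cover_free_remove (e : nat) (Y : {set T}) (J : {set I}) (j0 : I) :
  cover_free e.+1 Y J -> j0 \in J -> cover_free e (Y :\: f j0) (J :\ j0).
Proof.
move=> cf j0J S j SJ cardS /setD1P [jj0 jJ] jS; apply/negP => cover.
have SJ' : j0 |: S \subset J.
  by rewrite finset.subUset finset.sub1set j0J (fintype.subset_trans SJ (subsetDl _ _)).
have cardS' : (#|j0 |: S| <= e.+1)%N by rewrite cardsU1; case: (j0 \in S) => /=; lia.
have jS' : j \notin j0 |: S by rewrite !inE negb_or jj0.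
apply: (negP (cf _ j SJ' cardS' jJ jS')).
apply/fintype.subsetP => x /setIP [xj xY].
rewrite finset.bigcup_setU finset.big_set1 inE.
case xj0: (x \in f j0) => //=.
by apply: (fintype.subsetP cover); rewrite !inE xj xY xj0.
Qed.

Lemma cover_free_card_le (e t : nat) (Y : {set T}) (J : {set I}) :
  cover_free e Y J -> (2 * #|Y| <= t * (e * e.+1))%N ->
  (#|J| <= e + #|[set U : {set T} | (#|U| <= t)%N]|)%N.
Proof.
elim: e Y J => [|e IHe] Y J cf cardY.
  move: cardY; rewrite muln0 leqn0 muln_eq0 /= cards_eq0 => /eqP Y0.
  case: (set_0Vmem J) => [->|[j jJ]]; first by rewrite cards0.
  have := cf finset.set0 j (finset.sub0set J).
  by rewrite cards0 inE Y0 finset.setI0 finset.sub0set => /(_ isT jJ isT).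
have [j0 /andP [j0J big]|none] :=
  pickP [pred j | (j \in J) && (e.+1 * t < #|f j :&: Y|)%N]; last first.
  apply: leq_trans (leq_addl _ _).
  apply: (cover_free_card_le_small_sets cf) => j jJ.
  by move: (none j); rewrite /= jJ /= => /negbT; rewrite -leqNgt.
have cardY' : (2 * #|Y :\: f j0| <= t * (e * e.+1))%N.
  by move: cardY big; rewrite cardsD finset.setIC; lia.
have := IHe _ _ (cover_free_remove cf j0J) cardY'.
by rewrite (cardsD1 j0 J) j0J; lia.
Qed.

End CoverFree.

Local Open Scope ring_scope.

Lemma exists_nonroot (R : numDomainType) (p : {poly R}) :
  p != 0 -> exists x, ~~ root p x.
Proof.
move=> p0; pose rs := [seq i%:R | i <- iota 0 (size p)] : seq R.
have rs_uniq : uniq rs.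
  by rewrite map_inj_uniq ?iota_uniq // => i j /eqP; rewrite eqr_nat => /eqP.
have [rs_roots|/allPn [x _ px]] := boolP (all (root p) rs); last by exists x.
by have := max_poly_roots p0 rs_roots rs_uniq; rewrite size_map size_iota ltnn.
Qed.

Lemma exists_generic_vector (R : numDomainType) (m n : nat) (A : 'M[R]_(m, n))
    (S : {set 'I_n}) :
  exists2 x : 'cV[R]_n, supp x = S &
    forall r, (A *m x) r 0 = 0 -> forall s, s \in S -> A r s = 0.
Proof.
(* With x_i = M ^+ i on S, (A x)_r is the value at M of the polynomial with
   coefficients A r s; M is chosen nonzero and not a root of any nonzero one. *)
pose p r : {poly R} := \sum_(s in S) A r s *: 'X^s.
have coef_p r s : s \in S -> (p r)`_s = A r s.
  move=> sS; rewrite coef_sum (bigD1 s) //= coefZ coefXn eqxx mulr1 big1 ?addr0 //.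
  move=> s' /andP [_ s's].
  by rewrite coefZ coefXn eq_sym (negbTE (s's : s' != s :> nat)) mulr0.
have P0 : 'X * \prod_(r | p r != 0) p r != 0.
  by rewrite mulf_neq0 ?polyX_eq0 //; apply/prodf_neq0.
have [M] := exists_nonroot P0.
rewrite rootE hornerM hornerX horner_prod mulf_eq0 negb_or => /andP [M0 /prodf_neq0 pM].
pose x : 'cV[R]_n := \col_i (if i \in S then M ^+ i else 0).
have Ax r : (A *m x) r 0 = (p r).[M].
  rewrite !mxE /p horner_sum (big_mkcond (fun i => i \in S)) /=.
  by apply: eq_bigr => i _; rewrite !mxE hornerZ hornerXn; case: (i \in S); rewrite ?mulr0.
exists x.
  apply/setP => i; rewrite inE mxE.
  by case: (i \in S); rewrite ?eqxx // expf_neq0.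
move=> r; rewrite Ax => pM0 s sS; rewrite -coef_p //.
have [->|pr] := eqVneq (p r) 0; first by rewrite coef0.
by move: (pM r pr); rewrite pM0 eqxx.
Qed.

Lemma sgr_addr_small (R : realDomainType) (a b : R) :
  `|b| < `|a| \/ b = 0 -> Num.sg (a + b) = Num.sg a.
Proof.
case=> [ba|->]; last by rewrite addr0.
have := ler_norm b; have := ler_norm (- b); rewrite normrN.
have [a_neg|a_pos|a0] := ltrgtP a 0.
- rewrite (ltr0_norm a_neg) in ba => ? ?; rewrite (ltr0_sg a_neg) ltr0_sg //; lra.
- rewrite (gtr0_norm a_pos) in ba => ? ?; rewrite (gtr0_sg a_pos) gtr0_sg //; lra.
- by move: ba; rewrite a0 normr0 ltNge normr_ge0.
Qed.

Lemma psi_scale_add_delta (R : realFieldType) (m n : nat) (A : 'M[R]_(m, n))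
    (x : 'cV[R]_n) (j : 'I_n) :
  (forall r, A r j != 0 -> (A *m x) r 0 != 0) ->
  exists2 N : R, 0 < N & psi A (N *: x + delta_mx j 0) = psi A x.
Proof.
move=> Ax; pose N := 1 + \sum_r `|A r j| / `|(A *m x) r 0|.
have N_gt0 : 0 < N.
  by rewrite /N ltr_pwDl // sumr_ge0 // => r _; rewrite divr_ge0.
have ratio_lt r : `|A r j| / `|(A *m x) r 0| < N.
  rewrite /N (bigD1 r) //=.
  suff : 0 <= \sum_(i | i != r) `|A i j| / `|(A *m x) i 0| by lra.
  by apply: sumr_ge0 => i _; rewrite divr_ge0.
exists N => //.
rewrite /psi /sgv mulmxDr -scalemxAr -colE.
move: (A *m x) Ax ratio_lt => y Ay ratio_lt.
apply/matrixP => r c; rewrite ord1 !mxE sgr_addr_small.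
  by rewrite sgrM (gtr0_sg N_gt0) mul1r.
have [->|Arj] := eqVneq (A r j) 0; [by right | left].
by rewrite normrM (gtr0_norm N_gt0) -ltr_pdivrMr ?normr_gt0 ?Ay.
Qed.

Lemma supp_scale_add_delta (R : numDomainType) (n : nat) (x : 'cV[R]_n) (N : R)
    (j : 'I_n) :
  N != 0 -> j \notin supp x -> supp (N *: x + delta_mx j 0) = j |: supp x.
Proof.
rewrite inE negbK => N0 /eqP xj; apply/setP => i; rewrite !inE !mxE eqxx andbT.
have [->|ij] := eqVneq i j; first by rewrite xj mulr0 add0r oner_neq0.
by rewrite addr0 mulf_eq0 negb_or N0.
Qed.

Lemma separates_supports_exists_row (R : realFieldType) (m n k : nat)
    (A : 'M[R]_(m, n)) (S : {set 'I_n}) (j : 'I_n) :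
  separates_supports k A -> (#|S| < k)%N -> j \notin S ->
  exists r, (forall s, s \in S -> A r s = 0) /\ A r j != 0.
Proof.
move=> sep cardS jS.
have [r /andP [/forall_inP vanish Arj]|none] :=
  pickP [pred r | [forall s in S, A r s == 0] && (A r j != 0)].
  by exists r; split=> // s /vanish /eqP.
have [x suppx generic] := exists_generic_vector A S.
have Ax r : A r j != 0 -> (A *m x) r 0 != 0.
  move=> Arj; apply/eqP => Ax0; move: (none r); rewrite /= Arj andbT => /negP; apply.
  by apply/forall_inP => s sS; rewrite (generic r Ax0 s sS).
have [N N_gt0 psiN] := psi_scale_add_delta Ax.
have supp_neq : S != j |: S.
  by apply/eqP => /setP /(_ j); rewrite finset.setU11 (negbTE jS).
have := sep x (N *: x + delta_mx j 0).
rewrite psiN eqxx /l0norm supp_scale_add_delta ?gt_eqF ?suppx // cardsU1 jS.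
by move/(_ (ltnW cardS) cardS supp_neq).
Qed.

Lemma separates_supports_cover_free (R : realFieldType) (m n k : nat)
    (A : 'M[R]_(m, n)) :
  separates_supports k.+1 A ->
  cover_free (fun j => supp (col j A)) k [set: 'I_m] [set: 'I_n].
Proof.
move=> sep S j _ cardS _ jS; rewrite finset.setIT.
have [r [vanish Arj]] := separates_supports_exists_row sep cardS jS.
apply/negP => /fintype.subsetP /(_ r); rewrite inE mxE Arj => /(_ isT).
by case/finset.bigcupP => s sS; rewrite inE mxE vanish ?eqxx.
Qed.

Lemma separates_supports_card_le (R : realFieldType) (m n k t : nat)
    (A : 'M[R]_(m, n)) :
  separates_supports k.+1 A -> (2 * m <= t * (k * k.+1))%N ->
  (n <= k + \sum_(i < t.+1) 'C(m, i))%N.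
Proof.
move=> sep; have := cover_free_card_le (t := t) (separates_supports_cover_free sep).
by rewrite card_draws_le !cardsT !card_ord.
Qed.

Lemma separates_supports_binomial_bound (R : realFieldType) (m n k : nat)
    (A : 'M[R]_(m, n)) :
  (2 <= k)%N -> (k ^ 2 <= n)%N -> separates_supports k A ->
  exists t, [/\ (0 < t)%N, (n <= 2 * \sum_(i < t.+1) 'C(m, i))%N,
              (m + t <= t * k ^ 2)%N & (k ^ 2 * (1 + 4 * t) <= 36 * m)%N].
Proof.
case: k => [|d] // d_gt0 kn sep.
have d_lt : (d * d.+1 < 2 * m)%N.
  rewrite ltnNge; apply/negP => md.
  have := separates_supports_card_le sep (_ : 2 * m <= 1 * (d * d.+1))%N.
  by rewrite mul1n big_ord_recr big_ord1 /= bin0 bin1 => /(_ md); nia.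
have [t t_gt t_le] : exists2 t,
    (2 * m < t * (d * d.+1))%N & (t * (d * d.+1) <= 2 * m + d * d.+1)%N.
  exists ((2 * m) %/ (d * d.+1)).+1; first by apply: ltn_ceil; nia.
  by have := leq_trunc_div (2 * m) (d * d.+1); rewrite mulSn; lia.
have n_le := separates_supports_card_le sep (ltnW t_gt).
case: t t_gt t_le n_le => [|t] // t_gt t_le n_le.
have sum_ge : (m.+1 <= \sum_(i < t.+2) 'C(m, i))%N.
  by rewrite !big_ord_recl bin0 bin1; lia.
have d_lt_m : (d < m)%N by nia.
have sq_le : (d.+1 ^ 2 <= 2 * (d * d.+1))%N by nia.
have t_sq : (t.+1 * d.+1 ^ 2 <= 2 * (t.+1 * (d * d.+1)))%N by nia.
exists t.+1; split; lia.
Qed.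

Lemma sum_binomial_le (R : realType) (m t : nat) : (0 < t)%N ->
  (\sum_(i < t.+1) 'C(m, i))%:R <= expR t%:R * ((m + t)%:R / t%:R) ^+ t :> R.
Proof.
move=> t_gt0.
have t_pos : (0 : R) < t%:R by rewrite ltr0n.
pose x : R := t%:R / (m + t)%:R.
have x_gt0 : 0 < x by rewrite divr_gt0 // ltr0n addn_gt0 t_gt0 orbT.
have x_le1 : x <= 1.
  by rewrite ler_pdivrMr ?ltr0n ?addn_gt0 ?t_gt0 ?orbT // mul1r ler_nat leq_addl.
have head_le : (\sum_(i < t.+1) 'C(m, i))%:R * x ^+ t <= (1 + x) ^+ m.
  rewrite natr_sum mulr_suml addrC exprD1n.
  rewrite (big_ord_widen (m + t).+1 (fun i => x ^+ i *+ 'C(m, i))) ?ltnS ?leq_addr //.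
  rewrite (big_ord_widen (m + t).+1 (fun i => 'C(m, i)%:R * x ^+ t)) ?ltnS ?leq_addl //.
  rewrite big_mkcond [leRHS]big_mkcond; apply: ler_sum => i _.
  case: ifP => [it|_]; last by case: ifP => // _; rewrite mulrn_wge0 // exprn_ge0 // ltW.
  case: ifP => [_|/negbT]; last first.
    by rewrite -ltnNge ltnS => mi; rewrite bin_small ?mul0r.
  by rewrite -[leRHS]mulr_natl ler_wpM2l // ler_wiXn2l // ?ltW // -ltnS.
have exp_le : (1 + x) ^+ m <= expR t%:R.
  apply: le_trans (_ : expR x ^+ m <= _).
    by apply: lerXn2r; rewrite ?nnegrE ?expR_ge1Dx ?expR_ge0 ?addr_ge0 ?ltW.
  rewrite -expRM_natl ler_expR /x mulrA ler_pdivrMr ?ltr0n ?addn_gt0 ?t_gt0 ?orbT //.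
  by rewrite -!natrM ler_nat; nia.
have -> : (m + t)%:R / t%:R = x^-1 by rewrite /x invf_div.
rewrite exprVn ler_pdivlMr ?exprn_gt0 //.
exact: le_trans head_le exp_le.
Qed.

Lemma half_le_ln (R : realType) (x : R) : 2 <= x -> 2^-1 <= ln x.
Proof.
move=> x2; apply: le_trans (_ : ln 2 <= _); last by rewrite ler_ln ?posrE //; lra.
have := @le_ln1Dx R (- 2^-1); rewrite (_ : 1 - 2^-1 = 2^-1 :> R); last by field.
by rewrite lnV ?posrE //; lra.
Qed.

Lemma ln_le_of_binomial_bound (R : realType) (n k m t : nat) :
  (0 < n)%N -> (2 <= k)%N -> (0 < t)%N ->
  (n <= 2 * \sum_(i < t.+1) 'C(m, i))%N -> (m + t <= t * k ^ 2)%N ->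
  ln (n%:R : R) <= ln (k%:R : R) * (1 + 4 * t%:R).
Proof.
move=> n_gt0 k2 t_gt0 n_le mt.
set s := (\sum_(i < t.+1) 'C(m, i))%N in n_le.
have k2R : (2 : R) <= k%:R by rewrite (ler_nat _ 2).
have half := half_le_ln k2R.
have s_gt0 : (0 < s)%N by move: n_gt0 n_le; lia.
have ln_n : ln (n%:R : R) <= ln 2 + ln (s%:R : R).
  rewrite -lnM ?posrE ?ltr0n // ler_ln ?posrE ?mulr_gt0 ?ltr0n //.
  by rewrite -(natrM R 2) ler_nat.
have q_gt0 : (0 : R) < (m + t)%:R / t%:R.
  by rewrite divr_gt0 ?ltr0n // addn_gt0 t_gt0 orbT.
have ln_s : ln (s%:R : R) <= t%:R + t%:R * ln ((m + t)%:R / t%:R : R).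
  have := sum_binomial_le R m t_gt0.
  rewrite -/s -ler_ln ?posrE ?ltr0n ?mulr_gt0 ?expR_gt0 ?exprn_gt0 //.
  by rewrite lnM ?posrE ?expR_gt0 ?exprn_gt0 // expRK lnXn // [t%:R * _]mulr_natl.
have ln_q : ln ((m + t)%:R / t%:R : R) <= 2 * ln (k%:R : R).
  have k_gt0 : (0 : R) < k%:R by rewrite (lt_le_trans _ k2R).
  rewrite [2 * _]mulr_natl -lnXn // ler_ln ?posrE ?exprn_gt0 //.
  by rewrite ler_pdivrMr ?ltr0n // -natrX -natrM ler_nat mulnC.
have ln2_le : ln (2 : R) <= ln (k%:R : R).
  by rewrite ler_ln ?posrE // (lt_le_trans _ k2R).
have t_pos : (0 : R) <= t%:R by [].
nra.
Qed.

Unset Implicit Arguments. Set Strict Implicit.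

Theorem theorem2 (R : realType) :
  exists c : R, 0 < c /\
    forall (n k m : nat) (A : 'M[R]_(m, n)),
      (2 <= k)%N -> (k ^ 2 <= n)%N ->
      separates_supports k A ->
      c * (k ^ 2)%:R * ln (n%:R : R) / ln (k%:R : R) <= m%:R.
Proof.
exists 36^-1; split => // n k m A k2 kn sep.
have [t [t_gt0 n_le mt km]] := separates_supports_binomial_bound k2 kn sep.
have n_gt0 : (0 < n)%N by apply: leq_trans kn; rewrite expn_gt0; lia.
have ln_n := ln_le_of_binomial_bound R n_gt0 k2 t_gt0 n_le mt.
have ln_k : (0 : R) < ln k%:R by rewrite ln_gt0 // ltr1n.
have kmR : (k ^ 2)%:R * (1 + 4 * t%:R) <= 36 * m%:R :> R.
  by move: km; rewrite -(ler_nat R) !natrM natrD natrM.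
rewrite ler_pdivrMr //.
have := ler_wpM2l (ler0n R (k ^ 2)) ln_n.
have := ler_wpM2r (ltW ln_k) kmR.
nra.
Qed.
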